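(* Let $S$ be the power series in $x$ defined by $$S=\frac{5+9x-3\sqrt{(1+x)(1+9x)}}4,$$ i.e. the root of $S+1/S=(5+9x)/2$ with constant term $1/2$. Then $S$ has radius of convergence $1/9$ and admits an analytic continuation (still denoted $S$) to $\mathbb C\setminus[-1,-1/9]$. In this domain, $S$ never vanishes and $|S|<1$. *)

From Stdlib Require Import Reals.
From Coquelicot Require Import Coquelicot.
Open Scope R_scope.

(* a : nat -> R are the coefficients of the formal power series S with
   constant term 1/2 solving S + 1/S = (5+9x)/2, written (after multiplying
   by the invertible series S) as the coefficientwise identity
   S^2 - ((5+9x)/2) S + 1 = 0. *)
Definition is_S_coeffs (a : nat -> R) : Prop :=
  a 0%nat = 1/2 /\
  forall n : nat,
    sum_f_R0 (fun k => a k * a (n - k)%nat) n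
    - (5/2) * a n
    - (9/2) * (match n with O => 0 | S m => a m end)
    + (match n with O => 1 | S _ => 0 end) = 0.

Definition slit_domain (z : C) : Prop :=
  ~ (Im z = 0 /\ -1 <= Re z <= -1/9).

Definition holo_at (F : C -> C) (z : C) : Prop :=
  @ex_derive C_AbsRing C_NormedModule F z.

From Stdlib Require Import Reals Lra Lia Psatz ClassicalEpsilon.
From Coquelicot Require Import Coquelicot.
Open Scope R_scope.

(* The coefficient identity turns into a quadratic recursive inequality for the
   |a_n|, which for 0 <= x <= 1/9 bounds the majorant sum of |a_n| x^n by 2/3 + 3x.
   Inside the disc |z| < 1/9 the Cauchy product shows that the sum P satisfies
   P^2 - (5+9z)/2 P + 1 = 0, and |P| <= 2/3 + 3|z| < 1.  The two roots of this
   equation have product 1 and both lie on the unit circle exactly when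
   (5+9z)/2 is in [-2, 2], i.e. when z is on the slit [-1, -1/9]; off the slit
   the root of modulus < 1 is unique and defines the continuation, whose
   difference quotients are controlled explicitly.  For real z in (-1, -1/9)
   the equation has no real root, so the series diverges there. *)

Lemma im_le_Cmod (w : C) : Rabs (Im w) <= Cmod w.
Proof.
  pose proof (Cmod2_alt w). pose proof (Cmod_ge_0 w).
  apply Rabs_le. split; nra.
Qed.

Lemma Re_sum_n (p : nat -> C) N : Re (sum_n p N) = sum_n (fun n => Re (p n)) N.
Proof. induction N; [rewrite !sum_O | rewrite !sum_Sn, <- IHN]; reflexivity. Qed.

Lemma Im_sum_n (p : nat -> C) N : Im (sum_n p N) = sum_n (fun n => Im (p n)) N.
Proof. induction N; [rewrite !sum_O | rewrite !sum_Sn, <- IHN]; reflexivity. Qed.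

Lemma pow_n_Cpow (z : C) n : pow_n z n = Cpow z n.
Proof. induction n; [reflexivity | simpl; rewrite IHn; reflexivity]. Qed.

Lemma sum_n_RtoC (c : C) (f : nat -> R) N :
  sum_n (fun k => (c * RtoC (f k))%C) N = (c * RtoC (sum_f_R0 f N))%C.
Proof.
  induction N; [rewrite sum_O; reflexivity|].
  rewrite sum_Sn, IHN. simpl sum_f_R0. rewrite RtoC_plus.
  symmetry. apply Cmult_plus_distr_l.
Qed.

Lemma is_series_C_iff (p : nat -> C) (P : C) :
  is_series p P <->
  is_series (fun n => Re (p n)) (Re P) /\ is_series (fun n => Im (p n)) (Im P).
Proof.
  unfold is_series. split.
  - intro H. pose proof (proj1 (filterlim_locally _ _) H) as Hb.
    split; apply filterlim_locally; intro eps; generalize (Hb eps); apply filter_imp;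
      intros N [HR HI]; [rewrite <- Re_sum_n | rewrite <- Im_sum_n]; assumption.
  - intros [HR HI]. apply filterlim_locally. intro eps.
    generalize (filter_and _ _ (proj1 (filterlim_locally _ _) HR eps)
                  (proj1 (filterlim_locally _ _) HI eps)).
    apply filter_imp. intros N [H1 H2].
    rewrite <- Re_sum_n in H1. rewrite <- Im_sum_n in H2. split; assumption.
Qed.

Lemma is_series_C_unique (p : nat -> C) (P Q : C) :
  is_series p P -> is_series p Q -> P = Q.
Proof. apply filterlim_locally_unique. Qed.

Lemma is_series_zero {K : AbsRing} {V : NormedModule K} :
  is_series (fun _ : nat => @zero V) zero.
Proof.
  apply (filterlim_ext (fun _ => zero)); [|apply filterlim_const].
  intro N. symmetry. apply sum_n_m_const_zero.
Qed.

Lemma is_series_RtoC (u : nat -> R) (l : R) :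
  is_series u l -> is_series (fun n => RtoC (u n)) (RtoC l).
Proof.
  intro Hu. apply is_series_C_iff.
  split; [exact Hu | exact (@is_series_zero R_AbsRing R_NormedModule)].
Qed.

Lemma is_series_C_mult (p q : nat -> C) (P Q : C) :
  is_series p P -> is_series q Q ->
  ex_series (fun n => Cmod (p n)) -> ex_series (fun n => Cmod (q n)) ->
  is_series (fun n => sum_n (fun k => (p k * q (n - k)%nat)%C) n) (P * Q)%C.
Proof.
  intros HP HQ Hp Hq.
  apply is_series_C_iff in HP as [HPr HPi]. apply is_series_C_iff in HQ as [HQr HQi].
  assert (Habs : forall (s : nat -> C) (f : C -> R), (forall w, Rabs (f w) <= Cmod w) ->
            ex_series (fun n => Cmod (s n)) -> ex_series (fun n => Rabs (f (s n)))).
  { intros s f Hf Hs.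
    apply (@ex_series_le R_AbsRing R_CompleteNormedModule _ (fun n => Cmod (s n))); [|exact Hs].
    intro n. change (Rabs (Rabs (f (s n))) <= Cmod (s n)). rewrite Rabs_Rabsolu. apply Hf. }
  pose proof (Habs p Re re_le_Cmod Hp) as Hpr. pose proof (Habs p Im im_le_Cmod Hp) as Hpi.
  pose proof (Habs q Re re_le_Cmod Hq) as Hqr. pose proof (Habs q Im im_le_Cmod Hq) as Hqi.
  apply is_series_C_iff; split.
  - eapply is_series_ext.
    2: exact (is_series_minus _ _ _ _ (is_series_mult _ _ _ _ HPr HQr Hpr Hqr)
                (is_series_mult _ _ _ _ HPi HQi Hpi Hqi)).
    intro n. rewrite Re_sum_n, sum_n_Reals. change (plus ?x (opp ?y)) with (x - y).
    rewrite <- minus_sum. apply sum_eq. intros k _. reflexivity.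
  - eapply is_series_ext.
    2: exact (is_series_plus _ _ _ _ (is_series_mult _ _ _ _ HPr HQi Hpr Hqi)
                (is_series_mult _ _ _ _ HPi HQr Hpi Hqr)).
    intro n. rewrite Im_sum_n, sum_n_Reals. change (plus ?x ?y) with (x + y).
    rewrite <- plus_sum. apply sum_eq. intros k _. reflexivity.
Qed.

Lemma is_series_shift {K : AbsRing} {V : NormedModule K} (p : nat -> V) (l : V) :
  is_series p l -> is_series (fun n => match n with O => zero | S m => p m end) l.
Proof.
  intro H. apply is_series_decr_1. simpl.
  match goal with |- is_series _ ?L => replace L with l; [exact H|] end.
  rewrite <- (plus_zero_r l) at 1. f_equal. symmetry.
  exact (@opp_zero (NormedModule.AbelianGroup K V)).
Qed.

Lemma is_series_first {K : AbsRing} {V : NormedModule K} (x : V) :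
  is_series (fun n => match n with O => x | S _ => zero end) x.
Proof.
  apply is_series_decr_1. simpl.
  match goal with |- is_series _ ?L => replace L with (@zero V); [apply is_series_zero|] end.
  symmetry. exact (@plus_opp_r (NormedModule.AbelianGroup K V) x).
Qed.

Lemma is_series_norm_le {K : AbsRing} {V : NormedModule K} (p : nat -> V) (P : V) (M : R) :
  is_series p P -> (forall N, norm (sum_n p N) <= M) -> norm P <= M.
Proof.
  intros HP Hb.
  assert (Hn : is_lim_seq (fun N => norm (sum_n p N)) (norm P)).
  { apply (filterlim_comp _ _ _ (sum_n p) norm eventually (locally P)); [exact HP|].
    apply filterlim_norm. }
  exact (is_lim_seq_le _ _ _ _ Hb Hn (is_lim_seq_const M)).
Qed.

Section Majorant.
Variable a : nat -> R.
Hypothesis Ha : is_S_coeffs a.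

Lemma S_coeff_1 : a 1%nat = -3/2.
Proof. destruct Ha as [H0 Hn]. specialize (Hn 1%nat). simpl in Hn. rewrite H0 in Hn. lra. Qed.

Lemma S_coeffs_rec m :
  a (S (S m)) = 2/3 * sum_f_R0 (fun i => a (S i) * a (S (m - i))) m - 3 * a (S m).
Proof.
  destruct Ha as [H0 Hn]. specialize (Hn (S (S m))).
  rewrite decomp_sum in Hn by lia. simpl pred in Hn. simpl sum_f_R0 in Hn at 1.
  rewrite (sum_eq _ (fun i => a (S i) * a (S (m - i))) m) in Hn.
  2:{ intros i Hi. destruct i; f_equal; f_equal; lia. }
  rewrite Nat.sub_diag, Nat.sub_0_r, H0 in Hn. lra.
Qed.

Lemma abs_S_coeffs_rec m :
  Rabs (a (S (S m))) <=
  2/3 * sum_f_R0 (fun i => Rabs (a (S i)) * Rabs (a (S (m - i)))) m + 3 * Rabs (a (S m)).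
Proof.
  rewrite S_coeffs_rec. unfold Rminus. eapply Rle_trans; [apply Rabs_triang|].
  rewrite Rabs_Ropp, !Rabs_mult, (Rabs_right (2/3)), (Rabs_right 3) by lra.
  apply Rplus_le_compat_r, Rmult_le_compat_l; [lra|].
  eapply Rle_trans; [apply sum_f_R0_triangle|].
  right. apply sum_eq. intros. apply Rabs_mult.
Qed.

Variable x : R.
Hypothesis x_ge0 : 0 <= x.
Hypothesis x_le : x <= 1/9.

Let term k := Rabs (a (S k)) * x ^ S k.
Let tail N := sum_f_R0 term N.

Lemma term_ge0 k : 0 <= term k.
Proof. apply Rmult_le_pos; [apply Rabs_pos | apply pow_le; lra]. Qed.

Lemma term_S k :
  term (S k) <= 2/3 * sum_f_R0 (fun i => term i * term (k - i)%nat) k + 3 * x * term k.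
Proof.
  unfold term at 1. eapply Rle_trans.
  { apply Rmult_le_compat_r; [apply pow_le; lra | apply abs_S_coeffs_rec]. }
  rewrite Rmult_plus_distr_r. apply Rplus_le_compat; right.
  - rewrite Rmult_assoc. f_equal. rewrite Rmult_comm, scal_sum.
    apply sum_eq. intros i Hi. unfold term.
    replace (S (S k)) with (S i + S (k - i))%nat by lia. rewrite pow_add. ring.
  - unfold term. simpl. ring.
Qed.

Lemma tail_S N : tail (S N) <= 3/2 * x + 2/3 * (tail N * tail N) + 3 * x * tail N.
Proof.
  unfold tail at 1. rewrite decomp_sum by lia. simpl pred.
  replace (term 0%nat) with (3/2 * x)
    by (unfold term; rewrite S_coeff_1, Rabs_left by lra; simpl; lra).
  assert (Hconv : sum_f_R0 (fun k => sum_f_R0 (fun i => term i * term (k - i)%nat) k) N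
                  <= tail N * tail N).
  { destruct N as [|N]; [unfold tail; simpl; lra|]. unfold tail. rewrite cauchy_finite by lia.
    enough (0 <= sum_f_R0 (fun k => sum_f_R0 (fun l => term (S (l + k)) * term (S N - l)%nat)
                                      (pred (S N - k))) (pred (S N))) by lra.
    apply cond_pos_sum. intro. apply cond_pos_sum. intro.
    apply Rmult_le_pos; apply term_ge0. }
  assert (Hsum : sum_f_R0 (fun k => term (S k)) N <=
     sum_f_R0 (fun k => sum_f_R0 (fun i => term i * term (k - i)%nat) k * (2/3)
                        + term k * (3 * x)) N).
  { apply sum_Rle. intros k _. pose proof (term_S k). lra. }
  rewrite plus_sum, <- !scal_sum in Hsum. fold (tail N) in Hsum. nra.
Qed.

Lemma tail_le N : tail N <= 1/6 + 3 * x.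
Proof.
  induction N.
  - unfold tail, term. simpl. rewrite S_coeff_1, Rabs_left by lra. lra.
  - pose proof (tail_S N). assert (0 <= tail N) by (apply cond_pos_sum, term_ge0). nra.
Qed.

Lemma abs_partial_sum_le N : sum_f_R0 (fun n => Rabs (a n) * x ^ n) N <= 2/3 + 3 * x.
Proof.
  destruct Ha as [H0 _].
  assert (Ha0 : Rabs (a 0%nat) * x ^ 0 = 1/2) by (rewrite H0, Rabs_right by lra; simpl; lra).
  destruct N as [|N]; [simpl; lra|].
  rewrite decomp_sum, Ha0 by lia. pose proof (tail_le N) as Htail.
  unfold tail, term in Htail. simpl pred. lra.
Qed.

End Majorant.

Lemma ex_series_abs_S_coeffs (a : nat -> R) (x : R) :
  is_S_coeffs a -> 0 <= x <= 1/9 -> ex_series (fun n => Rabs (a n) * x ^ n).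
Proof.
  intros Ha Hx.
  assert (Hpos : forall n, 0 <= Rabs (a n) * x ^ n)
    by (intro; apply Rmult_le_pos; [apply Rabs_pos | apply pow_le; lra]).
  destruct (ex_finite_lim_seq_incr (sum_n (fun n => Rabs (a n) * x ^ n)) (2/3 + 3 * x))
    as [l Hl].
  - intro n. rewrite sum_Sn. pose proof (Hpos (S n)). change (plus ?u ?v) with (u + v). lra.
  - intro n. rewrite sum_n_Reals. apply abs_partial_sum_le; tauto.
  - exists l. exact Hl.
Qed.

Lemma C_sqrt_exists (v : C) : exists s : C, (s * s = v)%C.
Proof.
  destruct v as [p q].
  set (m := sqrt (p * p + q * q)).
  assert (Hm0 : 0 <= m) by apply sqrt_pos.
  assert (Hmm : m * m = p * p + q * q) by (apply sqrt_sqrt; nra).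
  set (A := (m + p) / 2). set (B := (m - p) / 2).
  assert (HA : 0 <= A) by (unfold A; nra). assert (HB : 0 <= B) by (unfold B; nra).
  pose proof (sqrt_sqrt A HA) as HsA. pose proof (sqrt_sqrt B HB) as HsB.
  pose proof (sqrt_pos A). pose proof (sqrt_pos B).
  assert (Hprod : sqrt A * sqrt B = Rabs q / 2).
  { apply Rsqr_inj; [nra | pose proof (Rabs_pos q); lra |].
    unfold Rsqr. replace (Rabs q / 2 * (Rabs q / 2)) with (Rabs q * Rabs q / 4) by field.
    rewrite <- Rabs_mult, Rabs_right by nra.
    replace (sqrt A * sqrt B * (sqrt A * sqrt B)) with ((sqrt A * sqrt A) * (sqrt B * sqrt B))
      by ring.
    rewrite HsA, HsB. unfold A, B. nra. }
  destruct (Rle_lt_dec 0 q) as [Hq|Hq];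
    [ rewrite Rabs_right in Hprod by lra; exists (sqrt A, sqrt B)
    | rewrite Rabs_left in Hprod by lra; exists (sqrt A, - sqrt B) ];
    apply injective_projections; simpl; unfold A, B in *; nra.
Qed.

Definition root_sum (z : C) : C := (RtoC (5/2) + RtoC (9/2) * z)%C.

Definition S_equation (z w : C) : Prop := (w * w - root_sum z * w + 1 = 0)%C.

Definition small_root (z w : C) : Prop := S_equation z w /\ Cmod w < 1.

Lemma S_equation_distinct_roots z w1 w2 :
  S_equation z w1 -> S_equation z w2 -> w1 <> w2 -> (w1 * w2 = 1)%C.
Proof.
  unfold S_equation. intros H1 H2 Hne.
  assert (E : ((w1 - w2) * (w1 + w2 - root_sum z) = 0)%C).
  { replace ((w1 - w2) * (w1 + w2 - root_sum z))%C with
      ((w1 * w1 - root_sum z * w1 + 1) - (w2 * w2 - root_sum z * w2 + 1))%C by ring.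
    rewrite H1, H2. ring. }
  destruct (Ceq_dec (w1 + w2 - root_sum z) 0) as [Hs|Hs].
  - replace (w1 * w2)%C with (1 - (w1 * w1 - root_sum z * w1 + 1) + w1 * (w1 + w2 - root_sum z))%C
      by ring.
    rewrite H1, Hs. ring.
  - exfalso. refine (Cmult_neq_0 _ _ _ Hs E). intro H0. apply Hne.
    replace w1 with ((w1 - w2) + w2)%C by ring. rewrite H0. ring.
Qed.

Lemma small_root_unique z w1 w2 : small_root z w1 -> small_root z w2 -> w1 = w2.
Proof.
  intros [H1 L1] [H2 L2]. destruct (Ceq_dec w1 w2) as [|Hne]; [assumption|].
  pose proof (f_equal Cmod (S_equation_distinct_roots z w1 w2 H1 H2 Hne)) as E.
  rewrite Cmod_mult, Cmod_1 in E. pose proof (Cmod_ge_0 w1). pose proof (Cmod_ge_0 w2). nra.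
Qed.

(* A root on the unit circle satisfies [w + conj w = root_sum z], which is real and
   lies in [-2, 2]. *)
Lemma unimodular_root_on_slit z w :
  S_equation z w -> Cmod w = 1 -> Im z = 0 /\ -1 <= Re z <= -1/9.
Proof.
  intros H Hw.
  assert (Hc : (w * Cconj w = 1)%C)
    by (rewrite <- Cmod2_conj, Hw; apply injective_projections; simpl; ring).
  assert (E : (w - root_sum z + Cconj w = 0)%C).
  { replace (w - root_sum z + Cconj w)%C with
      ((w * w - root_sum z * w + 1) * Cconj w + (w - root_sum z) * (1 - w * Cconj w))%C by ring.
    rewrite H, Hc. ring. }
  pose proof (Cmod2_alt w) as Hw2. rewrite Hw in Hw2.
  destruct w as [c d], z as [x y]. simpl in *.
  pose proof (f_equal Re E) as ER. pose proof (f_equal Im E) as EI.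
  unfold root_sum in ER, EI. simpl in ER, EI. field_simplify in EI. field_simplify in ER.
  split; [nra | split; nra].
Qed.

Lemma small_root_exists z : slit_domain z -> exists w, small_root z w.
Proof.
  intro Hz. destruct (C_sqrt_exists (root_sum z * root_sum z - RtoC 4)%C) as [s Hs].
  set (w1 := ((root_sum z + s) / RtoC 2)%C). set (w2 := ((root_sum z - s) / RtoC 2)%C).
  assert (E1 : S_equation z w1).
  { unfold S_equation, w1.
    replace (((root_sum z + s) / RtoC 2) * ((root_sum z + s) / RtoC 2)
             - root_sum z * ((root_sum z + s) / RtoC 2) + 1)%C
      with ((s * s - (root_sum z * root_sum z - RtoC 4)) / RtoC 4)%C by field.
    rewrite Hs. field. }
  assert (E2 : S_equation z w2).
  { unfold S_equation, w2.
    replace (((root_sum z - s) / RtoC 2) * ((root_sum z - s) / RtoC 2)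
             - root_sum z * ((root_sum z - s) / RtoC 2) + 1)%C
      with ((s * s - (root_sum z * root_sum z - RtoC 4)) / RtoC 4)%C by field.
    rewrite Hs. field. }
  assert (E12 : (w1 * w2 = 1)%C).
  { unfold w1, w2. replace (((root_sum z + s) / RtoC 2) * ((root_sum z - s) / RtoC 2))%C
      with (1 - (s * s - (root_sum z * root_sum z - RtoC 4)) / RtoC 4)%C by field.
    rewrite Hs. field. }
  apply (f_equal Cmod) in E12. rewrite Cmod_mult, Cmod_1 in E12.
  destruct (Rlt_le_dec (Cmod w1) 1) as [L1|L1]; [exists w1; split; assumption|].
  destruct (Rlt_le_dec (Cmod w2) 1) as [L2|L2]; [exists w2; split; assumption|].
  exfalso. apply Hz, (unimodular_root_on_slit z w1 E1).
  pose proof (Cmod_ge_0 w1). pose proof (Cmod_ge_0 w2). nra.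
Qed.

Lemma S_coeffs_conv (a : nat -> R) n : is_S_coeffs a ->
  sum_f_R0 (fun k => a k * a (n - k)%nat) n =
  5/2 * a n + 9/2 * (match n with O => 0 | S m => a m end)
  - (match n with O => 1 | S _ => 0 end).
Proof. intros [_ Hn]. specialize (Hn n). lra. Qed.

(* [sum_n] states its equations at the carrier of [C_AbelianMonoid], where [ring]
   does not recognise the field [C]. *)
Local Ltac as_C_equation := match goal with |- ?l = ?r => change (@eq C l r) end.

Lemma S_coeffs_conv_C (a : nat -> R) (z : C) n : is_S_coeffs a ->
  sum_n (fun k => (Cpow z k * RtoC (a k)) * (Cpow z (n - k) * RtoC (a (n - k)%nat)))%C n =
  (RtoC (5/2) * (Cpow z n * RtoC (a n))
   + RtoC (9/2) * z * (match n with O => 0 | S m => Cpow z m * RtoC (a m) end)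
   - (match n with O => 1 | S _ => 0 end))%C.
Proof.
  intro Ha.
  rewrite (sum_n_ext_loc _ (fun k => Cpow z n * RtoC (a k * a (n - k)%nat))%C).
  2:{ intros k Hk. as_C_equation.
      replace (Cpow z n) with (Cpow z k * Cpow z (n - k))%C
        by (rewrite <- Cpow_add_r; f_equal; lia).
      rewrite RtoC_mult. ring. }
  rewrite sum_n_RtoC, (S_coeffs_conv a n Ha).
  as_C_equation.
  destruct n as [|m]; simpl Cpow; rewrite ?RtoC_minus, ?RtoC_plus, ?RtoC_mult; ring.
Qed.

Lemma S_pseries_root (a : nat -> R) (z P : C) :
  is_S_coeffs a -> ex_series (fun n => Rabs (a n) * Cmod z ^ n) ->
  @is_pseries C_AbsRing C_NormedModule (fun n => RtoC (a n)) z P -> S_equation z P.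
Proof.
  intros Ha Habs HP.
  set (p := fun n => (Cpow z n * RtoC (a n))%C).
  assert (Hp : is_series p P).
  { eapply is_series_ext; [|exact HP]. intro n. simpl. rewrite pow_n_Cpow. reflexivity. }
  assert (Hpabs : ex_series (fun n => Cmod (p n))).
  { eapply ex_series_ext; [|exact Habs]. intro n.
    unfold p. rewrite Cmod_mult, Cmod_pow, Cmod_R. apply Rmult_comm. }
  pose proof (is_series_C_mult p p P P Hp Hp Hpabs Hpabs) as Hsq.
  pose proof (is_series_plus _ _ _ _
                (is_series_plus _ _ _ _ (is_series_scal (RtoC (5/2)) _ _ Hp)
                   (is_series_scal (RtoC (9/2) * z)%C _ _ (is_series_shift p P Hp)))
                (is_series_opp _ _ (is_series_first (RtoC 1)))) as Hlin.
  assert (E := is_series_C_unique _ _ _ Hsq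
                 (is_series_ext _ _ _ (fun n => eq_sym (S_coeffs_conv_C a z n Ha)) Hlin)).
  change ((P * P)%C = (RtoC (5/2) * P + RtoC (9/2) * z * P + - RtoC 1)%C) in E.
  unfold S_equation, root_sum. rewrite E. ring.
Qed.

Lemma S_root_real_outside (x G : R) :
  S_equation (RtoC x) (RtoC G) -> x <= -1 \/ -1/9 <= x.
Proof.
  intro E. apply (f_equal Re) in E. unfold root_sum in E. simpl in E.
  destruct (Rle_lt_dec x (-1)) as [|Hx1]; [left; assumption|].
  destruct (Rle_lt_dec (-1/9) x) as [|Hx2]; [right; assumption|].
  exfalso. pose proof (pow2_ge_0 (G - (5/2 + 9/2 * x) / 2)). nra.
Qed.

Lemma CV_disk_S_coeffs (a : nat -> R) : is_S_coeffs a -> CV_disk a (1/9).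
Proof.
  intro Ha. eapply ex_series_ext; [|apply (ex_series_abs_S_coeffs a (1/9) Ha); lra].
  intro n. rewrite Rabs_mult, (Rabs_right ((1/9) ^ n)); [reflexivity|].
  apply Rle_ge, pow_le. lra.
Qed.

Lemma CV_disk_S_coeffs_le (a : nat -> R) (r : R) : is_S_coeffs a -> CV_disk a r -> r <= 1/9.
Proof.
  intros Ha Hr. apply Rnot_lt_le. intro Hlt.
  set (x := Rmax (- r) (-1/2)).
  assert (Hx : -1 < x < -1/9).
  { unfold x. split.
    - apply Rlt_le_trans with (-1/2); [lra | apply Rmax_r].
    - apply Rmax_lub_lt; lra. }
  assert (Hxr : CV_disk a x).
  { apply (CV_disk_le _ _ r); [|exact Hr]. rewrite Rabs_left, Rabs_right by lra.
    unfold x. apply Ropp_le_cancel. rewrite Ropp_involutive. apply Rmax_l. }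
  destruct (ex_series_Rabs _ Hxr) as [G HG].
  assert (Hroot : S_equation (RtoC x) (RtoC G)).
  { apply (S_pseries_root a); [exact Ha | |].
    - eapply ex_series_ext; [|exact Hxr]. intro n.
      rewrite Cmod_R, Rabs_mult, RPow_abs. reflexivity.
    - eapply is_series_ext; [|exact (is_series_RtoC _ _ HG)]. intro n. simpl.
      rewrite pow_n_Cpow, <- RtoC_pow, RtoC_mult. apply Cmult_comm. }
  destruct (S_root_real_outside x G Hroot); lra.
Qed.

Lemma CV_radius_S_coeffs (a : nat -> R) : is_S_coeffs a -> CV_radius a = Finite (1/9).
Proof.
  intro Ha. apply is_lub_Rbar_unique. split.
  - intros r Hr. apply (CV_disk_S_coeffs_le a r Ha Hr).
  - intros l Hl. apply Hl, CV_disk_S_coeffs, Ha.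
Qed.

Definition S_cont (z : C) : C := epsilon (inhabits (RtoC 0)) (small_root z).

Lemma S_cont_spec z : (exists w, small_root z w) -> small_root z (S_cont z).
Proof. apply epsilon_spec. Qed.

Lemma S_cont_small_root z : slit_domain z -> small_root z (S_cont z).
Proof. intro Hz. apply S_cont_spec, small_root_exists, Hz. Qed.

Lemma S_cont_pseries (a : nat -> R) (z : C) : is_S_coeffs a -> Cmod z < 1/9 ->
  @is_pseries C_AbsRing C_NormedModule (fun n => RtoC (a n)) z (S_cont z).
Proof.
  intros Ha Hz. pose proof (Cmod_ge_0 z) as Hz0.
  set (p := fun n => @scal C_AbsRing C_NormedModule (pow_n z n) (RtoC (a n))).
  assert (Hnorm : forall n, @norm C_AbsRing C_NormedModule (p n) = Rabs (a n) * Cmod z ^ n).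
  { intro n. change (Cmod (pow_n z n * RtoC (a n))%C = Rabs (a n) * Cmod z ^ n).
    rewrite Cmod_mult, pow_n_Cpow, Cmod_pow, Cmod_R. apply Rmult_comm. }
  assert (Habs : ex_series (fun n => Rabs (a n) * Cmod z ^ n))
    by (apply ex_series_abs_S_coeffs; [exact Ha | lra]).
  destruct (@ex_series_le C_AbsRing C_CompleteNormedModule p _
              (fun n => Req_le _ _ (Hnorm n)) Habs) as [P HP].
  assert (HsmallP : small_root z P).
  { split; [exact (S_pseries_root a z P Ha Habs HP)|].
    apply Rle_lt_trans with (2/3 + 3 * Cmod z); [|lra].
    apply (is_series_norm_le p P _ HP). intro N.
    eapply Rle_trans; [apply (@norm_sum_n_m C_AbsRing C_NormedModule)|].
    rewrite (sum_n_m_ext _ (fun n => Rabs (a n) * Cmod z ^ n)) by apply Hnorm.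
    change (sum_n (fun n => Rabs (a n) * Cmod z ^ n) N <= 2/3 + 3 * Cmod z).
    rewrite sum_n_Reals. apply abs_partial_sum_le; [exact Ha | lra | lra]. }
  assert (Hcont : small_root z (S_cont z)) by (apply S_cont_spec; exists P; exact HsmallP).
  rewrite (small_root_unique z (S_cont z) P Hcont HsmallP). exact HP.
Qed.

Lemma C_is_derive_of_remainder (f : C -> C) (z l : C) (d K : R) : 0 < d -> 0 <= K ->
  (forall y, Cmod (y - z) < d ->
     Cmod (f y - f z - (y - z) * l) <= K * (Cmod (y - z) * Cmod (y - z))) ->
  @is_derive C_AbsRing C_NormedModule f z l.
Proof.
  intros Hd HK Hrem. split; [apply is_linear_scal_l|].
  intros x Hx.
  assert (z = x) as <-
    by exact (@is_filter_lim_locally_unique C_AbsRing (AbsRing_NormedModule C_AbsRing) _ _ Hx).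
  intro eps. pose proof (cond_pos eps) as Heps.
  assert (Hk : 0 < eps / (K + 1)) by (apply Rdiv_lt_0_compat; lra).
  exists (mkposreal _ (Rmin_pos _ _ Hd Hk)). intros y Hy.
  change (Cmod (y - z)%C < Rmin d (eps / (K + 1))) in Hy.
  change (Cmod (f y - f z - (y - z) * l)%C <= eps * Cmod (y - z)%C).
  pose proof (Cmod_ge_0 (y - z)).
  assert (Hy2 : Cmod (y - z) * (K + 1) <= eps).
  { apply Rle_trans with (eps / (K + 1) * (K + 1)); [|right; field; lra].
    apply Rmult_le_compat_r; [lra|]. apply Rlt_le, Rlt_le_trans with (1 := Hy), Rmin_r. }
  eapply Rle_trans; [apply Hrem, Rlt_le_trans with (1 := Hy), Rmin_l|]. nra.
Qed.

Lemma slit_domain_open z :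
  slit_domain z -> exists d, 0 < d /\ forall y, Cmod (y - z) < d -> slit_domain y.
Proof.
  destruct z as [p q]. unfold slit_domain. simpl. intro Hs.
  destruct (Req_dec q 0) as [->|Hq].
  - assert (Hp : p < -1 \/ -1/9 < p).
    { destruct (Rlt_le_dec p (-1)); [left; assumption|].
      destruct (Rle_lt_dec p (-1/9)); [|right; assumption].
      exfalso. apply Hs. split; [reflexivity | lra]. }
    (* The distance from [p] to [-1, -1/9], whose midpoint is -5/9. *)
    exists (Rabs (p + 5/9) - 4/9).
    split; [destruct Hp; [rewrite Rabs_left | rewrite Rabs_right]; lra|].
    intros y Hy [_ Hy2]. pose proof (re_le_Cmod (y - (p, 0))%C) as Hre.
    destruct y as [u v]. simpl in *. apply Rabs_le_between in Hre.
    destruct Hp; [rewrite Rabs_left in Hy | rewrite Rabs_right in Hy]; lra.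
  - exists (Rabs q). split; [apply Rabs_pos_lt, Hq|].
    intros y Hy [Hy1 _]. pose proof (im_le_Cmod (y - (p, q))%C) as Him.
    destruct y as [u v]. simpl in *. subst v.
    replace (0 + - q) with (- q) in Him by ring. rewrite Rabs_Ropp in Him. lra.
Qed.

Lemma Cmod_sub_1_ge (u : C) : 1 - Cmod u <= Cmod (u - 1).
Proof.
  assert (E : (u + - (u - 1))%C = 1%C) by ring.
  pose proof (Cmod_triangle u (- (u - 1))%C) as H. rewrite E, Cmod_opp, Cmod_1 in H. lra.
Qed.

Lemma S_equation_diff z y w w' : S_equation z w -> S_equation y w' ->
  ((w' - w) * (w * w' - 1) = RtoC (9/2) * (y - z) * w * w')%C.
Proof.
  unfold S_equation, root_sum. intros Ew Ew'.
  replace ((w' - w) * (w * w' - 1))%C with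
    (RtoC (9/2) * (y - z) * w * w' + w * (w' * w' - (RtoC (5/2) + RtoC (9/2) * y) * w' + 1)
     - w' * (w * w - (RtoC (5/2) + RtoC (9/2) * z) * w + 1))%C by ring.
  rewrite Ew, Ew'. ring.
Qed.

Lemma Cmod_RtoC_9_2 : Cmod (RtoC (9/2)) = 9/2.
Proof. rewrite Cmod_R. apply Rabs_right. lra. Qed.

Lemma small_root_lipschitz z y w w' : small_root z w -> small_root y w' ->
  Cmod (w' - w) * (1 - Cmod w) <= 9/2 * Cmod (y - z).
Proof.
  intros [Ew Lw] [Ew' Lw'].
  pose proof (f_equal Cmod (S_equation_diff z y w w' Ew Ew')) as E.
  rewrite !Cmod_mult, Cmod_RtoC_9_2 in E.
  pose proof (Cmod_sub_1_ge (w * w')) as Hww'. rewrite Cmod_mult in Hww'.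
  pose proof (Cmod_ge_0 w). pose proof (Cmod_ge_0 w'). pose proof (Cmod_ge_0 (w' - w)).
  pose proof (Cmod_ge_0 (y - z)).
  apply Rle_trans with (Cmod (w' - w) * Cmod (w * w' - 1)); [apply Rmult_le_compat_l; nra|].
  rewrite E. assert (Cmod w * Cmod w' <= 1) by nra. nra.
Qed.

(* Implicit differentiation of [S^2 - root_sum z * S + 1 = 0]. *)
Definition S_deriv (w : C) : C := (RtoC (9/2) * w * w / (w * w - 1))%C.

Lemma small_root_taylor z y w w' : small_root z w -> small_root y w' ->
  Cmod (w' - w - (y - z) * S_deriv w) * (1 - Cmod w) ^ 3
  <= 81/4 * (Cmod (y - z) * Cmod (y - z)).
Proof.
  intros Hw Hw'. pose proof (small_root_lipschitz z y w w' Hw Hw') as Hlip.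
  destruct Hw as [Ew Lw], Hw' as [Ew' Lw'].
  set (h := (y - z)%C) in *. set (D := (w' - w)%C) in *.
  set (E := (D - h * S_deriv w)%C).
  assert (Hww : (w * w - 1)%C <> 0).
  { intro H0. assert (Cmod (w * w) = 1)
      by (replace (w * w)%C with ((w * w - 1) + 1)%C by ring; rewrite H0, Cplus_0_l; apply Cmod_1).
    rewrite Cmod_mult in H. pose proof (Cmod_ge_0 w). nra. }
  assert (Id : (E * (w * w' - 1) * (w * w - 1) = - RtoC (9/2) * h * w * D)%C).
  { unfold E, S_deriv.
    replace ((D - h * (RtoC (9/2) * w * w / (w * w - 1))) * (w * w' - 1) * (w * w - 1))%C
      with (D * (w * w' - 1) * (w * w - 1) - RtoC (9/2) * h * w * w * (w * w' - 1))%C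
      by (field; exact Hww).
    unfold D, h. rewrite (S_equation_diff z y w w' Ew Ew'). ring. }
  pose proof (f_equal Cmod Id) as IdM.
  rewrite !Cmod_mult, Cmod_opp, Cmod_RtoC_9_2 in IdM.
  pose proof (Cmod_sub_1_ge (w * w')) as H1. pose proof (Cmod_sub_1_ge (w * w)) as H2.
  rewrite Cmod_mult in H1, H2.
  pose proof (Cmod_ge_0 w). pose proof (Cmod_ge_0 w'). pose proof (Cmod_ge_0 h).
  pose proof (Cmod_ge_0 D). pose proof (Cmod_ge_0 E).
  assert (HA : 1 - Cmod w <= Cmod (w * w' - 1)) by nra.
  assert (HB : 1 - Cmod w <= Cmod (w * w - 1)) by nra.
  assert (Hsq : Cmod E * (1 - Cmod w) * (1 - Cmod w) <= 9/2 * Cmod h * Cmod D).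
  { apply Rle_trans with (Cmod E * Cmod (w * w' - 1) * Cmod (w * w - 1)).
    - apply Rmult_le_compat; [nra | lra | apply Rmult_le_compat_l; lra | lra].
    - rewrite IdM. assert (0 <= Cmod h * Cmod D) by nra. nra. }
  fold E. nra.
Qed.

Lemma S_cont_holo z : slit_domain z -> holo_at S_cont z.
Proof.
  intro Hz. destruct (slit_domain_open z Hz) as [d [Hd Hopen]].
  pose proof (S_cont_small_root z Hz) as Hw.
  set (k := (1 - Cmod (S_cont z)) ^ 3).
  assert (Hk : 0 < k) by (destruct Hw; apply pow_lt; lra).
  exists (S_deriv (S_cont z)).
  apply (C_is_derive_of_remainder _ _ _ d (81/4 / k));
    [exact Hd | apply Rlt_le, Rdiv_lt_0_compat; lra |].
  intros y Hy. apply Rmult_le_reg_r with k; [exact Hk|].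
  replace (81/4 / k * (Cmod (y - z) * Cmod (y - z)) * k)
    with (81/4 * (Cmod (y - z) * Cmod (y - z))) by (field; lra).
  apply (small_root_taylor z y _ _ Hw (S_cont_small_root y (Hopen y Hy))).
Qed.

Lemma S_equation_nonzero z w : S_equation z w -> w <> RtoC 0.
Proof.
  intros E ->. apply (f_equal Re) in E. unfold root_sum in E. simpl in E. lra.
Qed.

Theorem lemma3p2 (a : nat -> R) (Ha : is_S_coeffs a) :
  CV_radius a = Finite (1/9) /\
  exists F : C -> C,
    (forall z : C, slit_domain z -> holo_at F z) /\
    (forall z : C, Cmod z < 1/9 ->
       @is_pseries C_AbsRing C_NormedModule (fun n => RtoC (a n)) z (F z)) /\
    (forall z : C, slit_domain z -> F z <> RtoC 0 /\ Cmod (F z) < 1).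
Proof.
  split; [exact (CV_radius_S_coeffs a Ha)|].
  exists S_cont. split; [|split].
  - exact S_cont_holo.
  - intros z Hz. exact (S_cont_pseries a z Ha Hz).
  - intros z Hz. destruct (S_cont_small_root z Hz) as [E L].
    split; [exact (S_equation_nonzero z _ E) | exact L].
Qed.
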